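(* Let $\{c_n\}_{n\ge1}$ be a real sequence with $\sum_{n=1}^\infty |c_n|<+\infty$, such that $\sum_{n=N}^{\infty}(c_n)^2>0$ and $\sum_{n=N}^\infty c_n\neq 0$ for every $N\ge1$. Let $f(x):=\sum_{n=1}^\infty c_n\varphi^{(n)}(x)$ and $f_N(x):=\sum_{n=1}^{N-1}c_n\varphi^{(n)}(x)$ for $x\in[0,1]$, $N=1,2,\dots$. Then $$\lim_{N\to\infty}\int_0^1\left(\frac{f(x)-f_N(x)}{\frac12\sum_{n=N}^\infty c_n}-1\right)^2dx=0$$ holds if and only if $$\lim_{N\to\infty}\frac{\sum_{n=N}^\infty (c_n)^2}{\left(\sum_{n=N}^\infty c_n\right)^2}=0.$$ Moreover, under this last condition, for every $\varepsilon>0$, $$\lim_{N\to\infty}P\left(\left\{x\in[0,1]: 1-\varepsilon\le \frac{f(x)-f_N(x)}{\frac12\sum_{n=N}^\infty c_n}\le 1+\varepsilon\right\}\right)=1.$$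
   Context: The tent map on $[0,1]$ is $\varphi(x)=2x$ for $x\in[0,1/2]$ and $\varphi(x)=2(1-x)$ for $x\in[1/2,1]$; it is extended to $\mathbb{R}$ by $\varphi(x):=\varphi(x-[x])$ (period 1), and $\varphi^{(n)}$ denotes the $n$-fold iterate of $\varphi$, so that $\varphi^{(n)}(x)=\varphi(2^{n-1}x)$. $P$ denotes Lebesgue measure on $[0,1]$ (with the Borel $\sigma$-field), viewed as a probability space. *)

From HB Require Import structures.
From mathcomp Require Import all_boot all_order all_algebra.
From mathcomp Require Import all_classical all_reals all_analysis.
Set Implicit Arguments. Unset Strict Implicit. Unset Printing Implicit Defensive.
Import Order.TTheory GRing.Theory Num.Theory.
Import numFieldNormedType.Exports.
Local Open Scope classical_set_scope.
Local Open Scope ring_scope.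

(* Tent map on [0,1], extended to R with period 1: phi(x) := phi(x - [x]). *)
Definition tent {R : realType} (x : R) : R :=
  let y := x - (Num.floor x)%:~R in
  if y <= 2^-1 then 2 * y else 2 * (1 - y).

Definition tentn {R : realType} (n : nat) (x : R) : R := iter n tent x.

Definition tailsum {R : realType} (u : nat -> R) (N : nat) : R :=
  lim ((fun M : nat => \sum_(N <= n < M) u n) @ \oo).

Definition tentf {R : realType} (c : nat -> R) (x : R) : R :=
  tailsum (fun n => c n * tentn n x) 1.

Definition tentfN {R : realType} (c : nat -> R) (N : nat) (x : R) : R :=
  \sum_(1 <= n < N) c n * tentn n x.

From HB Require Import structures.
From mathcomp Require Import all_boot all_order all_algebra.
From mathcomp Require Import all_classical all_reals all_analysis.
From mathcomp Require Import ring lra measurable_realfun.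
Import Order.TTheory GRing.Theory Num.Theory.
Import numFieldNormedType.Exports.
Local Open Scope classical_set_scope.
Local Open Scope ring_scope.

(* On [0, 1] the tent map T is 2-to-1 with preimages x/2 and 1 - x/2, so it
   preserves Lebesgue measure, and int_0^1 (x - 1/2) h(T x) dx = 0 for every h.
   Consequently the centred iterates psi_n = T^n - 1/2 form an orthogonal family,
   each with squared L^2 norm 1/12.  With A_N the tail sum of c from N, on [0, 1]
     (f - f_N) / (A_N / 2) - 1 = (2 / A_N) sum_{n >= N} c_n psi_n,
   so by Pythagoras and bounded convergence its squared L^2 norm is exactly
   (1/3) (sum_{n >= N} c_n^2) / A_N^2.  This gives the equivalence, and Chebyshev's
   inequality gives the convergence in measure. *)

Lemma continuousT_comp {T U V : topologicalType} {f : T -> U} {g : U -> V} :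
  continuous f -> continuous g -> continuous (fun x => g (f x)).
Proof. by move=> cf cg x; exact: (continuous_comp (cf x) (cg _)). Qed.

Lemma continuous_sqr {R : realType} {f : R -> R} :
  continuous f -> continuous (fun x => f x ^+ 2).
Proof. by move=> cf x; exact: (continuous_comp (cf x) (@exprn_continuous R 2 _)). Qed.

Lemma continuous_sum {R : realType} {I : Type} (r : seq I) (P : pred I)
    (F : I -> R -> R) :
  (forall i, P i -> continuous (F i)) -> continuous (fun x => \sum_(i <- r | P i) F i x).
Proof. exact/continuous_big/add_continuous. Qed.

Lemma sum_nat_sub_le {R : numDomainType} (u : nat -> R) {a b m n : nat} :
  (a <= b)%N -> (m <= n)%N -> (forall i, 0 <= u i) ->
  \sum_(b <= i < m) u i <= \sum_(a <= i < n) u i.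
Proof.
move=> ab mn u0.
rewrite (big_nat_widenl _ _ _ _ _ ab) (big_nat_widen _ _ _ _ _ mn) big_mkcond.
by apply: ler_sum_nat => i _; case: ifP.
Qed.

Lemma cvg0_EFinZ {R : realType} (u : nat -> R) (k : R) : k != 0 ->
  (fun n => (k * u n)%:E) @ \oo --> 0%E <-> u @ \oo --> 0.
Proof.
move=> k_neq0; split => [/fine_cvg /(cvgMl_tmp (a := k^-1))|u0].
  by rewrite mulr0; under eq_fun do rewrite /= mulKf //.
apply: cvg_EFin; first exact: nearW.
by rewrite -(mulr0 k); exact: cvgMl_tmp.
Qed.

Section tent_on_unit_interval.
Context {R : realType}.

Definition tent01 (x : R) : R := 1 - `|2 * x - 1|.

Lemma tent01_continuous : continuous tent01.
Proof.
move=> x; apply: cvgB; first exact: cvg_cst.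
by apply: cvg_norm; apply: cvgB; [apply: cvgMl_tmp; exact: cvg_id|exact: cvg_cst].
Qed.

Lemma iter_tent01_continuous n : continuous (iter n tent01).
Proof.
elim: n => [|n IH] x /=; first exact: cvg_id.
exact: (continuous_comp (IH x) (tent01_continuous _)).
Qed.

Lemma tent01_itv x : 0 <= x <= 1 -> 0 <= tent01 x <= 1.
Proof.
move=> /andP[x0 x1]; rewrite /tent01 subr_ge0 lerBlDr lerDl normr_ge0 andbT.
by rewrite ler_norml; lra.
Qed.

Lemma iter_tent01_itv n x : 0 <= x <= 1 -> 0 <= iter n tent01 x <= 1.
Proof. by move=> x01; elim: n => //= n; exact: tent01_itv. Qed.

Lemma norm_iter_tent01_le1 n x : 0 <= x <= 1 -> `|iter n tent01 x| <= 1.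
Proof. by move=> /(iter_tent01_itv n) /andP[? ?]; rewrite ger0_norm. Qed.

Lemma tent_tent01 x : 0 <= x <= 1 -> tent x = tent01 x.
Proof.
move=> /andP[x0 x1]; rewrite /tent /tent01.
have [->|x_neq1] := eqVneq x 1.
  have -> : Num.floor (1 : R) = 1 by apply/eqP; rewrite floor_eq; lra.
  by rewrite subrr ifT ?mulr0 ?ger0_norm; lra.
have -> : Num.floor x = 0 by apply/eqP; rewrite floor_eq; apply/andP; split => /=; lra.
rewrite subr0; case: ifP => [x_le|/negbT]; last rewrite -ltNge => x_gt.
  by rewrite ler0_norm; lra.
by rewrite ger0_norm; lra.
Qed.

Lemma tentn_iter_tent01 n x : 0 <= x <= 1 -> tentn n x = iter n tent01 x.
Proof.
move=> x01; elim: n => //= n IH.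
by rewrite -IH tent_tent01 // IH; exact: iter_tent01_itv.
Qed.

End tent_on_unit_interval.

Section unit_interval_integral.
Context {R : realType}.
Notation mu := (@lebesgue_measure R).
Implicit Types (f g : R -> R).

Definition int01 f : R := (\int[mu]_(x in `[0, 1]) f x)%R.

Lemma continuous_integrable01 {f} : continuous f -> mu.-integrable `[0, 1] (EFin \o f).
Proof.
move=> cf; apply: continuous_compact_integrable; first exact: segment_compact.
exact: continuous_subspaceT.
Qed.

Lemma int01E f : continuous f -> (\int[mu]_(x in `[0%R, 1%R]) (f x)%:E)%E = (int01 f)%:E.
Proof.
move=> cf; rewrite /int01 /Rintegral fineK //.
exact/integrable_fin_num/continuous_integrable01.
Qed.

Lemma eq_int01 f g : (forall x, 0 <= x <= 1 -> f x = g x) -> int01 f = int01 g.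
Proof. by move=> fg; apply: eq_Rintegral => x; rewrite inE /= in_itv /= => /fg. Qed.

Lemma int01D f g : continuous f -> continuous g ->
  int01 (fun x => f x + g x) = int01 f + int01 g.
Proof. by move=> cf cg; rewrite /int01 RintegralD // continuous_integrable01. Qed.

Lemma int01B f g : continuous f -> continuous g ->
  int01 (fun x => f x - g x) = int01 f - int01 g.
Proof. by move=> cf cg; rewrite /int01 RintegralB // continuous_integrable01. Qed.

Lemma int01Z f r : continuous f -> int01 (fun x => r * f x) = r * int01 f.
Proof. by move=> cf; rewrite /int01 RintegralZl // continuous_integrable01. Qed.

Lemma lebesgue_measure_itv01 : mu `[0, 1] = 1%E.
Proof. by rewrite lebesgue_measure_itv /= lte_fin ltr01 oppr0 adde0. Qed.

Lemma int01_cst r : int01 (fun _ => r) = r.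
Proof. by rewrite /int01 Rintegral_cst // (congr1 fine lebesgue_measure_itv01) mulr1. Qed.

Lemma int01_sum {I : Type} (r : seq I) (P : pred I) (F : I -> R -> R) :
  (forall i, continuous (F i)) ->
  int01 (fun x => \sum_(i <- r | P i) F i x) = \sum_(i <- r | P i) int01 (F i).
Proof.
move=> cF; elim: r => [|i r IH].
  by rewrite big_nil -[RHS](int01_cst 0); apply: eq_int01 => x _; rewrite big_nil.
rewrite big_cons -IH; case: ifP => Pi.
  rewrite -int01D //; last exact: continuous_sum.
  by apply: eq_int01 => x _; rewrite big_cons Pi.
by apply: eq_int01 => x _; rewrite big_cons Pi.
Qed.

Lemma int01_sum_sqr {I : eqType} (r : seq I) (u : I -> R -> R) (a : I -> R) (v : R) :
  uniq r -> (forall i, continuous (u i)) ->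
  (forall i j, int01 (fun x => u i x * u j x) = (i == j)%:R * v) ->
  int01 (fun x => (\sum_(i <- r) a i * u i x) ^+ 2) = v * \sum_(i <- r) a i ^+ 2.
Proof.
move=> r_uniq cu u_orth.
have cuu i j : continuous (fun x => u i x * u j x) by move=> x; apply: cvgM; exact: cu.
transitivity (int01 (fun x => \sum_(i <- r) \sum_(j <- r) a i * a j * (u i x * u j x))).
  apply: eq_int01 => x _; rewrite expr2 mulr_suml; apply: eq_bigr => i _.
  by rewrite mulr_sumr; apply: eq_bigr => j _; ring.
rewrite int01_sum => [|i]; last first.
  by apply: continuous_sum => j _ x; apply: cvgMl_tmp; exact: cuu.
rewrite mulr_sumr; apply: eq_big_seq => i ir.
rewrite int01_sum => [|j]; last by move=> x; apply: cvgMl_tmp; exact: cuu.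
rewrite (bigD1_seq i) //= big1 => [|j /negbTE ji]; last first.
  by rewrite int01Z // u_orth eq_sym ji mul0r mulr0.
by rewrite int01Z // u_orth eqxx mul1r addr0; ring.
Qed.

Lemma Rintegral_itv0_scale a f : 0 < a -> continuous f ->
  (\int[mu]_(x in `[0, a]) f x = \int[mu]_(x in `[0, 1]) (f (x * a) * a))%R.
Proof.
move=> a0 cf.
have da : (fun x : R => x * a)^`()%classic = cst a.
  by apply/funext => x; rewrite derive1Mr // derive1_id mul1r.
have := @integration_by_substitution_increasing R (fun x => x * a) f 0 1 ler01.
rewrite mul0r mul1r da /Rintegral => -> //.
- by move=> x y _ _ xy; rewrite ltr_pM2r.
- by move=> x _; exact: cvg_cst.
- exact: is_cvg_cst.
- exact: is_cvg_cst.
- split.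
  + by move=> x _; exact: derivableM.
  + by apply: cvg_at_right_filter; apply: cvgMr_tmp; exact: cvg_id.
  + by apply: cvg_at_left_filter; apply: cvgMr_tmp; exact: cvg_id.
- exact: continuous_subspaceT.
Qed.

Lemma int01_halves f : continuous f ->
  int01 f = int01 (fun x => (f (x / 2) + f (1 - x / 2)) / 2).
Proof.
move=> cf.
have half_cont : continuous (fun x : R => x / 2).
  by move=> x; apply: cvgMr_tmp; exact: cvg_id.
have cf_half (g : R -> R) : continuous g -> continuous (fun x : R => g (x / 2) / 2).
  by move=> cg x; apply: cvgMr_tmp; exact: (continuous_comp (half_cont x) (cg _)).
have onem_cont : continuous (fun x : R => 1 - x).
  by move=> x; apply: cvgB; [exact: cvg_cst|exact: cvg_id].
have cf1 : continuous (fun x : R => f (1 - x)).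
  by move=> x; exact: (continuous_comp (onem_cont x) (cf _)).
have split_half : int01 f =
    (\int[mu]_(x in `[0, 2^-1]) f x + \int[mu]_(x in `[2^-1, 1]) f x)%R.
  have := @Rintegral_itvB R f (BLeft 0) (BRight 1) (2^-1) (continuous_integrable01 cf).
  rewrite !bnd_simp => /(_ ltac:(lra) ltac:(lra)).
  rewrite Rintegral_itv_obnd_cbnd; last first.
    apply: integrableS (continuous_integrable01 cf) => //.
    by apply: subset_itvr; rewrite bnd_simp; lra.
  by move=> <-; rewrite addrC subrK.
have upper_half :
    (\int[mu]_(x in `[2^-1, 1]) f x = \int[mu]_(x in `[0, 2^-1]) f (1 - x))%R.
  have := @Rintegration_by_substitution_onem R (fun x => f (1 - x)) (2^-1).
  rewrite (_ : unstable.onem (2^-1 : R) = 2^-1); last by rewrite /unstable.onem; lra.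
  move=> -> //; last by apply: continuous_subspaceT.
    by apply: eq_Rintegral => x _; rewrite /unstable.onem opprB addrC subrK.
  by lra.
rewrite split_half upper_half !(Rintegral_itv0_scale (2^-1)) //.
rewrite -RintegralD //; last 2 first.
- by apply: continuous_integrable01; apply: cf_half.
- by apply: continuous_integrable01 => x; apply: cf_half cf1 x.
by apply: eq_Rintegral => x _; rewrite mulrDl.
Qed.

End unit_interval_integral.

Section tent_invariance.
Context {R : realType}.
Implicit Types (x y : R) (h : R -> R).

Lemma tent01_preimages x : 0 <= x <= 1 -> tent01 (x / 2) = x /\ tent01 (1 - x / 2) = x.
Proof. by move=> /andP[x0 x1]; rewrite /tent01 ler0_norm ?ger0_norm; lra. Qed.

Lemma int01_comp_tent01 h : continuous h -> int01 (fun x => h (tent01 x)) = int01 h.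
Proof.
move=> ch; rewrite int01_halves; last exact: continuousT_comp (@tent01_continuous R) ch.
by apply: eq_int01 => x /tent01_preimages[-> ->]; lra.
Qed.

Lemma int01_centered_comp_tent01 h : continuous h ->
  int01 (fun x => (x - 2^-1) * h (tent01 x)) = 0.
Proof.
move=> ch; rewrite int01_halves -?[RHS](int01_cst 0).
  by apply: eq_int01 => x /tent01_preimages[-> ->]; lra.
move=> x; apply: cvgM; first by apply: cvgB; [exact: cvg_id|exact: cvg_cst].
exact: continuousT_comp (@tent01_continuous R) ch x.
Qed.

Lemma int01_comp_iter_tent01 n h : continuous h ->
  int01 (fun x => h (iter n tent01 x)) = int01 h.
Proof.
elim: n h => [//|n IH] h ch.
under eq_int01 do rewrite iterSr.
rewrite (int01_comp_tent01 (fun y => h (iter n tent01 y))) ?IH //.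
exact: continuousT_comp (iter_tent01_continuous n) ch.
Qed.

Definition psi n (x : R) : R := iter n tent01 x - 2^-1.

Lemma psi_continuous n : continuous (psi n).
Proof. by move=> x; apply: cvgB; [exact: iter_tent01_continuous|exact: cvg_cst]. Qed.

Lemma int01_psiM_lt m n : (m < n)%N -> int01 (fun x => psi m x * psi n x) = 0.
Proof.
move=> /subnK <-; set k := (n - m.+1)%N; rewrite -addSnnS.
pose h (y : R) := (y - 2^-1) * psi k (tent01 y).
have h_cont : continuous h.
  move=> y; apply: cvgM; first by apply: cvgB; [exact: cvg_id|exact: cvg_cst].
  exact: continuousT_comp (@tent01_continuous R) (psi_continuous _) y.
transitivity (int01 (fun x => h (iter m tent01 x))).
  by apply: eq_int01 => x _; rewrite /h /psi iterD iterSr.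
rewrite (int01_comp_iter_tent01 m h) // int01_centered_comp_tent01 //.
exact: psi_continuous.
Qed.

Lemma int01_centered_sqr : int01 (fun x => (x - 2^-1) ^+ 2) = 12^-1.
Proof.
have c_id : continuous (fun x : R => x - 2^-1).
  by move=> x; apply: cvgB; [exact: cvg_id|exact: cvg_cst].
have c_sqr := continuous_sqr c_id.
have int_id : int01 (fun x => x - 2^-1) = 0.
  rewrite -[RHS](int01_centered_comp_tent01 (fun _ => 1)); last first.
    by move=> ?; exact: cvg_cst.
  by apply: eq_int01 => x _; rewrite mulr1.
set V := int01 _.
have eqV : V = int01 (fun x => 4^-1 * ((x - 2^-1) ^+ 2 - (x - 2^-1) + 4^-1)).
  by rewrite /V int01_halves //; apply: eq_int01 => x _; lra.
have c_sqr_id : continuous (fun x => (x - 2^-1) ^+ 2 - (x - 2^-1)).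
  by move=> x; apply: cvgB; [exact: c_sqr|exact: c_id].
have c_quarter : continuous (fun _ : R => 4^-1 : R) by move=> ?; exact: cvg_cst.
rewrite int01Z in eqV; last by move=> x; apply: cvgD; [exact: c_sqr_id|exact: c_quarter].
rewrite (int01D _ _ c_sqr_id c_quarter) (int01B _ _ c_sqr c_id) in eqV.
rewrite int_id int01_cst -/V in eqV.
lra.
Qed.

Lemma int01_psi_sqr n : int01 (fun x => psi n x ^+ 2) = 12^-1.
Proof.
have c_sqr : continuous (fun y : R => (y - 2^-1) ^+ 2).
  by apply: continuous_sqr => y; apply: cvgB; [exact: cvg_id|exact: cvg_cst].
by rewrite -int01_centered_sqr -(int01_comp_iter_tent01 n _ c_sqr).
Qed.

Lemma int01_psiM m n : int01 (fun x => psi m x * psi n x) = (m == n)%:R * 12^-1.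
Proof.
have [mn|nm|<-] := ltngtP m n.
- by rewrite int01_psiM_lt // mul0r.
- rewrite mul0r -(int01_psiM_lt _ _ nm).
  by apply: eq_int01 => x _; rewrite mulrC.
- by rewrite mul1r -(int01_psi_sqr m); apply: eq_int01 => x _; rewrite expr2.
Qed.

End tent_invariance.

Section abs_summable.
Context {R : realType} {c : nat -> R}.
Hypothesis c_abs : cvg ((fun M : nat => \sum_(1 <= n < M) `|c n|) @ \oo).

Lemma sum_abs_le_tailsum N M :
  (1 <= N)%N -> \sum_(N <= n < M) `|c n| <= tailsum (fun n => `|c n|) 1.
Proof.
move=> N1; apply: le_trans (sum_nat_sub_le _ N1 (leqnn M) _) _ => //.
by apply: (nondecreasing_cvgn_le _ c_abs) => i j ij; exact: sum_nat_sub_le.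
Qed.

Lemma tailsum_abs_ge0 : 0 <= tailsum (fun n => `|c n|) 1.
Proof. by apply: le_trans (sum_abs_le_tailsum 1 1 _) => //; rewrite big_geq. Qed.

Lemma cvg_nonneg_dominated_sums (p : nat -> R) K N :
  (1 <= N)%N -> 0 <= K -> (forall n, 0 <= p n) ->
  (forall n, (N <= n)%N -> p n <= K * `|c n|) ->
  cvg ((fun M => \sum_(N <= n < M) p n) @ \oo).
Proof.
move=> N1 K0 p0 pK; apply: nondecreasing_is_cvgn.
  by move=> i j ij; exact: sum_nat_sub_le.
exists (K * tailsum (fun n => `|c n|) 1) => _ [M _ <-].
apply: le_trans (_ : \sum_(N <= n < M) K * `|c n| <= _).
  by apply: ler_sum_nat => n /andP[Nn _]; exact: pK.
by rewrite -mulr_sumr ler_wpM2l // sum_abs_le_tailsum.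
Qed.

Lemma cvg_dominated_sums (u : nat -> R) K N :
  (1 <= N)%N -> 0 <= K -> (forall n, (N <= n)%N -> `|u n| <= K * `|c n|) ->
  cvg ((fun M => \sum_(N <= n < M) u n) @ \oo).
Proof.
move=> N1 K0 uK.
have -> : (fun M => \sum_(N <= n < M) u n) = (fun M =>
    \sum_(N <= n < M) ((`|u n| + u n) / 2) - \sum_(N <= n < M) ((`|u n| - u n) / 2)).
  by apply/funext => M; rewrite -sumrB; apply: eq_bigr => n _; lra.
have u_le n : u n <= `|u n| by exact: ler_norm.
have Nu_le n : - u n <= `|u n| by rewrite -normrN; exact: ler_norm.
apply: is_cvgB; apply: (cvg_nonneg_dominated_sums _ K) => // n.
all: try (move=> /uK); move: (u_le n) (Nu_le n); lra.
Qed.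

Lemma cvg_sum_sqr N : (1 <= N)%N -> cvg ((fun M => \sum_(N <= n < M) c n ^+ 2) @ \oo).
Proof.
move=> N1; apply: (cvg_dominated_sums _ (tailsum (fun n => `|c n|) 1)) => //.
  exact: tailsum_abs_ge0.
move=> n Nn; rewrite normrX expr2 ler_wpM2r //.
by have := sum_abs_le_tailsum n n.+1 (leq_trans N1 Nn); rewrite big_nat1.
Qed.

End abs_summable.

Section psi_partial_sums.
Context {R : realType} (c : nat -> R).
Implicit Types x : R.

Definition psi_sum N M x : R := \sum_(N <= n < M) c n * psi n x.

Lemma psi_sum_continuous N M : continuous (psi_sum N M).
Proof. by apply: continuous_sum => n _ x; apply: cvgMl_tmp; exact: psi_continuous. Qed.

Lemma int01_psi_sum_sqr N M :
  int01 (fun x => psi_sum N M x ^+ 2) = 12^-1 * \sum_(N <= n < M) c n ^+ 2.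
Proof. exact: int01_sum_sqr (iota_uniq _ _) psi_continuous int01_psiM. Qed.

Hypothesis c_abs : cvg ((fun M : nat => \sum_(1 <= n < M) `|c n|) @ \oo).

Lemma psi_sum_bounded N M x : (1 <= N)%N -> 0 <= x <= 1 ->
  `|psi_sum N M x| <= tailsum (fun n => `|c n|) 1.
Proof.
move=> N1 x01; apply: le_trans (sum_abs_le_tailsum c_abs _ M N1).
apply: le_trans; first exact: ler_norm_sum.
apply: ler_sum => n _.
rewrite normrM ler_piMr // /psi ler_norml.
by have /andP[? ?] := iter_tent01_itv n _ x01; apply/andP; split; lra.
Qed.

Lemma psi_sum_cvg N x : (1 <= N)%N -> 0 <= x <= 1 ->
  psi_sum N M x @[M --> \oo] --> tentf c x - tentfN c N x - 2^-1 * tailsum c N.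
Proof.
move=> N1 x01.
have f_cvg : (fun M => \sum_(1 <= n < M) c n * tentn n x) @ \oo --> tentf c x.
  apply: (cvg_dominated_sums c_abs _ 1) => // n _.
  by rewrite normrM mul1r tentn_iter_tent01 // ler_piMr // norm_iter_tent01_le1.
have A_cvg : (fun M => \sum_(N <= n < M) c n) @ \oo --> tailsum c N.
  by apply: (cvg_dominated_sums c_abs _ 1) => // n _; rewrite mul1r.
have lim_cvg : (fun M => \sum_(1 <= n < M) c n * tentn n x - tentfN c N x
    - 2^-1 * \sum_(N <= n < M) c n) @ \oo
    --> tentf c x - tentfN c N x - 2^-1 * tailsum c N.
  by apply: cvgB; [apply: cvgB; [exact: f_cvg|exact: cvg_cst]|apply: cvgMl_tmp].
apply: cvg_trans lim_cvg.
apply: near_eq_cvg; near=> M.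
have NM : (N <= M)%N by near: M; exists N.
rewrite (big_cat_nat N1 NM) /= /tentfN addrC addrK /psi_sum mulr_sumr -sumrB.
by apply: eq_bigr => n _; rewrite tentn_iter_tent01 // /psi; ring.
Unshelve. all: by end_near.
Qed.

End psi_partial_sums.

Section unit_interval_limits.
Context {R : realType}.
Notation mu := (@lebesgue_measure R).

Lemma bounded_cvg_int01 (g_ : nat -> R -> R) (g : R -> R) (B : R) :
  (forall M, continuous (g_ M)) ->
  (forall M x, 0 <= x <= 1 -> `|g_ M x| <= B) ->
  (forall x, 0 <= x <= 1 -> g_ ^~ x @ \oo --> g x) ->
  (fun M => (int01 (g_ M))%:E) @ \oo --> (\int[mu]_(x in `[0%R, 1%R]) (g x)%:E)%E.
Proof.
move=> cg gB gg; set D := `[0%R, 1%R]%classic.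
have mg_ M : measurable_fun D (g_ M).
  exact: measurable_funS (continuous_measurable_fun (cg M)).
have mg : measurable_fun D g.
  by apply: (measurable_fun_cvg mg_) => x; rewrite /D /= in_itv /=; exact: gg.
have gg_ae : {ae mu, forall x, D x -> (fun M => (g_ M x)%:E) @ \oo --> (g x)%:E}.
  apply: aeW => x; rewrite /D /= in_itv /= => x01.
  by apply: cvg_EFin; [exact: nearW|exact: gg].
have gB_ae : {ae mu, forall x M, D x -> (`|(g_ M x)%:E| <= B%:E)%E}.
  by apply: aeW => x M; rewrite /D /= in_itv /= lee_fin; exact: gB.
have B_int : mu.-integrable D (fun=> B%:E).
  by apply: continuous_integrable01 => x; exact: cvg_cst.
have [_ _] := @dominated_convergence _ _ _ mu D (measurable_itv _)
  (fun M x => (g_ M x)%:E) (EFin \o g) (fun=> B%:E)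
  (fun M => (measurable_EFinP _ _).2 (mg_ M)) ((measurable_EFinP _ _).2 mg)
  gg_ae B_int gB_ae.
apply: cvg_trans; apply: near_eq_cvg; apply: nearW => M /=.
by rewrite int01E.
Qed.

Lemma chebyshev_itv01 (f : R -> R) (eps q : R) :
  measurable_fun (`[0%R, 1%R] : set R) f -> 0 < eps ->
  (\int[mu]_(x in `[0%R, 1%R]) (f x ^+ 2)%:E)%E = q%:E ->
  ((1 - q / eps ^+ 2)%:E <= mu (`[0%R, 1%R] `&` f @^-1` `[(- eps)%R, eps]))%E.
Proof.
move=> mf eps0 int_fq; set D := `[0%R, 1%R]%classic; set near := D `&` _.
have mD : measurable D by exact: measurable_itv.
have mf2 : measurable_fun D (fun x => f x ^+ 2) by exact: measurable_funX.
pose far := D `&` [set x | ((eps ^+ 2)%:E <= `|(f x ^+ 2)%:E|)%E].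
have far_E : far = D `&` (fun x => f x ^+ 2) @^-1` `[eps ^+ 2, +oo[.
  apply/seteqP; split => x /= [Dx h]; split => //; move: h;
    by rewrite /= in_itv /= andbT lee_fin ger0_norm ?sqr_ge0.
have m_near : measurable near by exact: mf.
have m_far : measurable far by rewrite far_E; exact: mf2.
have markov : ((eps ^+ 2)%:E * mu far <= q%:E)%E.
  have := @le_integral_comp_abse _ _ _ mu D mD (fun x => (f x ^+ 2)%:E) (eps ^+ 2) id
    (@measurable_id _ _ _) (fun r r0 => r0) (fun x y _ _ xy => xy).
  move=> /(_ ((measurable_EFinP _ _).2 mf2) (exprn_gt0 2 eps0)) /le_trans; apply.
  rewrite -int_fq le_eqVlt; apply/orP; left; apply/eqP.
  by apply: eq_integral => x _; rewrite /= ger0_norm ?sqr_ge0.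
have cover : (1 <= mu near + mu far)%E.
  rewrite -lebesgue_measure_itv01; apply: le_trans (measureU2 mu m_near m_far).
  apply: le_measure; rewrite ?inE //; first exact: measurableU.
  move=> x Dx; have [near_x|far_x] := leP `|f x| eps; [left|right]; split => //=.
    by rewrite in_itv /= -ler_norml.
  by rewrite lee_fin ger0_norm ?sqr_ge0 // -[f x ^+ 2]real_normK ?num_real //; nra.
rewrite EFinB leeBlDr // (le_trans cover) // leeD2l // EFinM.
by rewrite lee_pdivlMr ?exprn_gt0 // muleC.
Qed.

End unit_interval_limits.

Section remainder_ratio.
Context {R : realType} (c : nat -> R).
Notation mu := (@lebesgue_measure R).
Hypothesis c_abs : cvg ((fun M : nat => \sum_(1 <= n < M) `|c n|) @ \oo).

Definition remainder_ratio N (x : R) : R :=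
  (tentf c x - tentfN c N x) / (2^-1 * tailsum c N).

Variable N : nat.
Hypotheses (N_gt0 : (0 < N)%N) (tailsum_neq0 : tailsum c N != 0).

Let a := 2^-1 * tailsum c N.

Let a_neq0 : a != 0.
Proof. by rewrite mulf_neq0 // invr_eq0. Qed.

Lemma remainder_ratio_cvg x : 0 <= x <= 1 ->
  psi_sum c N M x / a @[M --> \oo] --> remainder_ratio N x - 1.
Proof.
move=> x01; rewrite /remainder_ratio -/a -[X in _ - X](divff a_neq0) -mulrBl.
by apply: cvgMr_tmp; exact: psi_sum_cvg.
Qed.

Lemma measurable_remainder_ratio :
  measurable_fun (`[0%R, 1%R] : set R) (fun x => remainder_ratio N x - 1).
Proof.
apply: (measurable_fun_cvg (h := fun M x => psi_sum c N M x / a)).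
  move=> M; apply: measurable_funS (continuous_measurable_fun _) => // x.
  by apply: cvgMr_tmp; exact: psi_sum_continuous.
by move=> x; rewrite /= in_itv /=; exact: remainder_ratio_cvg.
Qed.

Lemma int01_remainder_ratio :
  (\int[mu]_(x in `[0%R, 1%R]) ((remainder_ratio N x - 1) ^+ 2)%:E)%E =
  (3^-1 * (tailsum (fun n => c n ^+ 2) N / tailsum c N ^+ 2))%:E.
Proof.
set L := tailsum (fun n => `|c n|) 1.
have int_cvg : (fun M => (int01 (fun x => (psi_sum c N M x / a) ^+ 2))%:E) @ \oo
    --> (\int[mu]_(x in `[0%R, 1%R]) ((remainder_ratio N x - 1) ^+ 2)%:E)%E.
  apply: (bounded_cvg_int01 _ _ ((L / a) ^+ 2)).
  - move=> M; apply: continuous_sqr => x; apply: cvgMr_tmp; exact: psi_sum_continuous.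
  - move=> M x x01; rewrite ger0_norm ?sqr_ge0 // !exprMn.
    apply: ler_wpM2r; first exact: sqr_ge0.
    have := psi_sum_bounded _ c_abs _ M _ N_gt0 x01.
    by rewrite -/L ler_norml => /andP[? ?]; nra.
  - move=> x x01; rewrite expr2; under eq_cvg do rewrite expr2.
    by apply: cvgM; exact: remainder_ratio_cvg.
have int_psi_sum M : int01 (fun x => (psi_sum c N M x / a) ^+ 2) =
    a ^- 2 * (12^-1 * \sum_(N <= n < M) c n ^+ 2).
  transitivity (int01 (fun x => a ^- 2 * psi_sum c N M x ^+ 2)).
    by apply: eq_int01 => x _; rewrite exprMn exprVn mulrC.
  by rewrite int01Z ?int01_psi_sum_sqr //; exact/continuous_sqr/psi_sum_continuous.
have sum_cvg : (fun M => (int01 (fun x => (psi_sum c N M x / a) ^+ 2))%:E) @ \oo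
    --> (a ^- 2 * (12^-1 * tailsum (fun n => c n ^+ 2) N))%:E.
  under eq_fun do rewrite int_psi_sum.
  apply: cvg_EFin; first exact: nearW.
  by apply: cvgMl_tmp; apply: cvgMl_tmp; exact: cvg_sum_sqr.
rewrite (@cvg_unique _ (@ereal_hausdorff R) _ _ _ _ int_cvg sum_cvg).
by congr EFin; rewrite /a; field.
Qed.

Lemma remainder_ratio_measure_bounds eps : 0 < eps ->
  ((1 - 3^-1 * (tailsum (fun n => c n ^+ 2) N / tailsum c N ^+ 2) / eps ^+ 2)%:E <=
    mu ([set x : R | x \in `[0%R, 1%R]] `&`
        [set x | (1 - eps <= remainder_ratio N x <= 1 + eps)%R]) <= 1)%E.
Proof.
move=> eps0.
have -> : [set x : R | x \in `[0%R, 1%R]] `&`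
    [set x | 1 - eps <= remainder_ratio N x <= 1 + eps] =
    `[0%R, 1%R] `&` (fun x => remainder_ratio N x - 1) @^-1` `[- eps, eps].
  apply/seteqP; split => x /= [x01 h]; split => //; move: h;
    by rewrite ?in_itv /= => /andP[? ?]; apply/andP; split; lra.
apply/andP; split.
  exact: chebyshev_itv01 measurable_remainder_ratio eps0 int01_remainder_ratio.
rewrite -lebesgue_measure_itv01; apply: le_measure; rewrite ?inE //.
by apply: measurable_remainder_ratio; exact: measurable_itv.
Qed.

End remainder_ratio.

Theorem theorem1p1 (R : realType) (c : nat -> R)
  (habs : cvg ((fun M : nat => \sum_(1 <= n < M) `|c n|) @ \oo))
  (hsq : forall N : nat, (1 <= N)%N -> 0 < tailsum (fun n => c n ^+ 2) N)
  (hnz : forall N : nat, (1 <= N)%N -> tailsum c N != 0) :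
  (((fun N : nat =>
       (\int[lebesgue_measure]_(x in `[0%R, 1%R])
          (((tentf c x - tentfN c N x) / (2^-1 * tailsum c N) - 1) ^+ 2)%:E)%E)
      @ \oo --> 0%E)
   <->
   ((fun N : nat => tailsum (fun n => c n ^+ 2) N / (tailsum c N) ^+ 2)
      @ \oo --> 0))
  /\
  (((fun N : nat => tailsum (fun n => c n ^+ 2) N / (tailsum c N) ^+ 2)
      @ \oo --> 0) ->
   forall eps : R, 0 < eps ->
     (fun N : nat =>
        lebesgue_measure
          ([set x : R | x \in `[0%R, 1%R] ] `&`
           [set x : R | 1 - eps <= (tentf c x - tentfN c N x) / (2^-1 * tailsum c N)
                        <= 1 + eps]))
       @ \oo --> 1%E).
Proof.
set r := fun N => tailsum (fun n => c n ^+ 2) N / tailsum c N ^+ 2.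
have int_r : \forall N \near \oo, (3^-1 * r N)%:E =
    (\int[lebesgue_measure]_(x in `[0%R, 1%R]) ((remainder_ratio c N x - 1) ^+ 2)%:E)%E.
  exists 1%N => // N N_gt0.
  by rewrite (int01_remainder_ratio _ habs _ N_gt0 (hnz N N_gt0)).
split.
  rewrite -(cvg0_EFinZ r 3^-1); last by rewrite invr_eq0 pnatr_eq0.
  split => r_cvg; apply: (cvg_trans _ r_cvg); apply: near_eq_cvg => //.
  by apply: filterS int_r => N /esym.
move=> r0 eps eps0.
apply: (squeeze_cvge (f := fun N => (1 - 3^-1 * r N / eps ^+ 2)%:E) (h := fun=> 1%E)).
- exists 1%N => // N N_gt0.
  exact: (remainder_ratio_measure_bounds _ habs _ N_gt0 (hnz N N_gt0) _ eps0).
- apply: cvg_EFin; first exact: nearW.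
  rewrite -[X in _ --> X]subr0; apply: cvgB; first exact: cvg_cst.
  by rewrite -(mul0r (eps ^+ 2)^-1) -(mulr0 3^-1); apply: cvgMr_tmp; exact: cvgMl_tmp.
- exact: cvg_cst.
Qed.
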